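(* Let $a,q$ be complex numbers with $q\ne0$, and let $B_{n,1}(a,0)$ ($n\ge1$) be defined by $z=\sum_{n=1}^\infty B_{n,1}(a,0)\,z^n(az;q)_n$ in $\mathbb{C}[[z]]$. Then every $F(z)\in\mathbb{C}[[z]]$ has the expansion $$F(z)=\sum_{n=0}^{\infty}c_nz^{n}(az;q)_n,$$ where $$c_n=[z^{n}]\Big\{\frac{F(z)}{(az;q)_n}\Big\}-a\sum_{k=0}^{n-1}B_{n-k,1}(a,0)\,q^{(n-k)k}\,[z^{k}]\Big\{\frac{F(z)}{(az;q)_{k+1}}\Big\}.$$
   Context: $(x;q)_n=\prod_{j=0}^{n-1}(1-xq^j)$ for $n\ge0$, $(x;q)_0=1$; quotients are regarded as formal power series in $z$, and $[z^m]\{f\}$ is the coefficient of $z^m$ in $f$. Empty sums are $0$. *)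

(* Complex numbers are modelled as [R[i]] (mathcomp-real-closed
   [complex]) over an arbitrary [R : realType]; formal power series in z over a
   ring are modelled as coefficient functions [nat -> C]. *)
From HB Require Import structures.
From mathcomp Require Import all_boot all_order all_algebra.
From mathcomp Require Import reals complex.
Set Implicit Arguments. Unset Strict Implicit. Unset Printing Implicit Defensive.
Import Order.TTheory GRing.Theory Num.Theory.
Local Open Scope ring_scope.

Definition qpoch {K : comRingType} (x q : K) (n : nat) : {poly K} :=
  \prod_(j < n) (1 - (x * q ^+ j) *: 'X).

(* Quotient F / P of a formal power series F (coefficients F : nat -> K) by a
   polynomial P with invertible constant term, as a formal power series:
   the unique H with P * H = F, computed by the usual triangular recursion
   H_m = (F_m - sum_{i=1}^m P_i H_{m-i}) / P_0.
   [fps_div_seq F P m] is the list [H_0; ...; H_m]. *)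
Fixpoint fps_div_seq {K : fieldType} (F : nat -> K) (P : {poly K}) (m : nat)
  : seq K :=
  match m with
  | 0 => [:: F 0%N / P`_0]
  | m'.+1 =>
      let s := fps_div_seq F P m' in
      rcons s ((F m - \sum_(i < m) P`_i.+1 * s`_(m' - i)) / P`_0)
  end.

Definition fps_div_coef {K : fieldType} (F : nat -> K) (P : {poly K}) (m : nat)
  : K := (fps_div_seq F P m)`_m.

From HB Require Import structures.
From mathcomp Require Import all_boot all_order all_algebra.
From mathcomp Require Import reals complex.
From mathcomp Require Import ring zify.
Set Implicit Arguments. Unset Strict Implicit. Unset Printing Implicit Defensive.
Import Order.TTheory GRing.Theory Num.Theory.
Local Open Scope ring_scope.

(* Let H_n = F / (az;q)_n.  As H_n = (1 - a q^n z) H_(n+1), the truncations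
   T_n = H_n mod z^n telescope:
     (az;q)_N T_N = sum_(n<N) (H_n[n] z^n (az;q)_n - a q^n H_(n+1)[n] z^(n+1) (az;q)_n),
   and the left-hand side agrees with F below degree N.  Substituting
   z -> q^k z in the identity defining B gives
     q^k z^(k+1) (az;q)_k = sum_(j>=1) B_j q^(jk) z^(j+k) (az;q)_(j+k),
   so re-expanding the second terms and exchanging the two sums yields c_n. *)

Section PolyCoef.
Variable R : comNzRingType.
Implicit Types (p r u : {poly R}) (G : nat -> R).

Lemma eq_coefMr u p r m :
  (forall i, (i <= m)%N -> p`_i = r`_i) -> (u * p)`_m = (u * r)`_m.
Proof. by move=> eq_pr; rewrite !coefM; apply: eq_bigr => j _; rewrite eq_pr ?leq_subr. Qed.

Lemma coefM1subZX p d i :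
  (p * (1 - d *: 'X))`_i = p`_i - d * (if i is j.+1 then p`_j else 0).
Proof.
by rewrite mulrBr mulr1 -scalerAr coefB coefZ coefMX; case: i => [|i]; rewrite ?mulr0.
Qed.

Lemma polyM1subZX G d N :
  \poly_(i < N.+1) G i * (1 - d *: 'X)
  = \poly_(i < N.+1) (G i - d * (if i is j.+1 then G j else 0))
    - (d * G N) *: 'X^(N.+1).
Proof.
apply/polyP => i; rewrite coefM1subZX coefB coefZ coefXn !coef_poly.
case: i => [|i]; first by rewrite ltn0Sn !mulr0 !subr0.
rewrite coef_poly !ltnS eqSS.
by case: (ltngtP i N) => [_|_|->]; rewrite /= ?mulr0 ?subr0 ?mulr1.
Qed.

End PolyCoef.

Section PowerSeriesDivision.
Variables (K : fieldType) (F : nat -> K) (P : {poly K}).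
Hypothesis P0_neq0 : P`_0 != 0.

Lemma size_fps_div_seq m : size (fps_div_seq F P m) = m.+1.
Proof. by elim: m => [|m IHm] //=; rewrite size_rcons IHm. Qed.

Lemma nth_fps_div_seq m i : (i <= m)%N -> (fps_div_seq F P m)`_i = fps_div_coef F P i.
Proof.
elim: m => [|m IHm]; first by rewrite leqn0 => /eqP ->.
rewrite leq_eqVlt => /predU1P [-> // | lt_im].
by rewrite /= nth_rcons size_fps_div_seq lt_im IHm.
Qed.

Lemma fps_div_coefS m :
  fps_div_coef F P m.+1
  = (F m.+1 - \sum_(i < m.+1) P`_i.+1 * fps_div_coef F P (m - i)) / P`_0.
Proof.
rewrite {1}/fps_div_coef /= nth_rcons size_fps_div_seq ltnn eqxx.
by congr ((_ - _) / _); apply: eq_bigr => i _; rewrite nth_fps_div_seq ?leq_subr.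
Qed.

Lemma coefM_fps_div N m :
  (m < N)%N -> (P * \poly_(i < N) fps_div_coef F P i)`_m = F m.
Proof.
move=> lt_mN; rewrite coefM.
under eq_bigr => i _ do rewrite coef_poly (leq_ltn_trans (leq_subr i m) lt_mN).
case: m lt_mN => [|m] _.
  by rewrite big_ord1 /fps_div_coef /= mulrC divfK.
by rewrite big_ord_recl fps_div_coefS mulrC divfK // subrK.
Qed.

Lemma fps_div_coef_unique (G : {poly K}) m :
  (forall i, (i <= m)%N -> (P * G)`_i = F i) -> G`_m = fps_div_coef F P m.
Proof.
pose D := G - \poly_(i < m.+1) fps_div_coef F P i.
move=> PG; suff D_eq0 i : (i <= m)%N -> D`_i = 0.
  by move/eqP: (D_eq0 m (leqnn m)); rewrite coefB coef_poly ltnSn subr_eq0 => /eqP.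
elim/ltn_ind: i => i IHi le_im.
have: (P * D)`_i = 0 by rewrite mulrBr coefB PG // coefM_fps_div ?subrr.
rewrite coefM big_ord_recl subn0 big1 ?addr0 => [/eqP|j _].
  by rewrite mulf_eq0 (negPf P0_neq0) => /eqP.
by rewrite lift0 IHi ?mulr0 //; have := ltn_ord j; lia.
Qed.

End PowerSeriesDivision.

Lemma fps_div_coefM (K : fieldType) (F : nat -> K) (P Q : {poly K}) m :
  P`_0 != 0 -> Q`_0 != 0 ->
  fps_div_coef F P m = (Q * \poly_(i < m.+1) fps_div_coef F (P * Q) i)`_m.
Proof.
move=> P0_neq0 Q0_neq0; symmetry; apply: (fps_div_coef_unique P0_neq0) => i le_im.
by rewrite mulrA coefM_fps_div ?coef0M ?mulf_neq0.
Qed.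

Section QPochhammer.
Variables (K : comNzRingType) (q : K).
Implicit Types (a c : K).

Lemma qpoch0 a : qpoch a q 0 = 1.
Proof. by rewrite /qpoch big_ord0. Qed.

Lemma qpochS a n : qpoch a q n.+1 = qpoch a q n * (1 - (a * q ^+ n) *: 'X).
Proof. by rewrite /qpoch big_ord_recr. Qed.

Lemma qpochD a k n : qpoch a q (k + n) = qpoch a q k * qpoch (a * q ^+ k) q n.
Proof.
rewrite /qpoch big_split_ord; congr (_ * _); apply: eq_bigr => i _.
by rewrite exprD mulrA.
Qed.

Lemma coef0_qpoch a n : (qpoch a q n)`_0 = 1.
Proof.
by rewrite -horner_coef0 /qpoch horner_prod big1 // => i _; rewrite !hornerE subr0.
Qed.

Lemma coef0_qpoch_neq0 a n : (qpoch a q n)`_0 != 0.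
Proof. by rewrite coef0_qpoch oner_neq0. Qed.

Lemma coef_qpochZ a c n i : (qpoch (a * c) q n)`_i = c ^+ i * (qpoch a q n)`_i.
Proof.
elim: n i => [|n IHn] i.
  by rewrite !qpoch0 !coef1; case: i => [|i]; rewrite /= ?expr0 ?mul1r ?mulr0.
rewrite !qpochS !coefM1subZX IHn; case: i => [|i]; first by rewrite !mulr0 !subr0.
rewrite IHn exprS; ring.
Qed.

Lemma coefXnM_qpochZ a c n i :
  c ^+ n * ('X^n * qpoch (a * c) q n)`_i = c ^+ i * ('X^n * qpoch a q n)`_i.
Proof.
rewrite !coefXnM; case: ltnP => [_|le_ni]; first by rewrite !mulr0.
by rewrite coef_qpochZ mulrA -exprD subnKC.
Qed.

End QPochhammer.

Section QPochhammerDivision.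
Variables (K : fieldType) (a q : K) (F : nat -> K).
Local Notation pi := (qpoch a q).
Local Notation H n := (fps_div_coef F (qpoch a q n)).

Lemma fps_div_qpochS n m :
  H n m = H n.+1 m - a * q ^+ n * (if m is j.+1 then H n.+1 j else 0).
Proof.
have lin0_neq0 : (1 - (a * q ^+ n) *: 'X : {poly K})`_0 != 0.
  by rewrite coefB coefZ coefX mulr0 subr0 coef1 oner_neq0.
rewrite (fps_div_coefM _ _ (coef0_qpoch_neq0 _ _ _) lin0_neq0) -qpochS mulrC.
rewrite coefM1subZX coef_poly ltnSn; case: m => [|m] //.
by rewrite coef_poly ltnW.
Qed.

Lemma trunc_fps_div_qpochS n :
  \poly_(i < n.+1) H n.+1 i * (1 - (a * q ^+ n) *: 'X)
  = \poly_(i < n) H n i + H n n *: 'X^n - (a * q ^+ n * H n.+1 n) *: 'X^(n.+1).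
Proof.
rewrite polyM1subZX; congr (_ - _).
under eq_poly => i _ do rewrite -fps_div_qpochS.
by rewrite !poly_def big_ord_recr.
Qed.

Lemma qpoch_trunc_telescope N :
  pi N * \poly_(i < N) H N i
  = \sum_(n < N) (H n n *: ('X^n * pi n)
                  - (a * q ^+ n * H n.+1 n) *: ('X^(n.+1) * pi n)).
Proof.
elim: N => [|N IHN]; first by rewrite big_ord0 poly_def big_ord0 mulr0.
rewrite big_ord_recr -IHN /= {1}qpochS mulrAC -mulrA trunc_fps_div_qpochS.
by rewrite mulrBr mulrDr -!scalerAr addrA [_ * 'X^N]mulrC [_ * 'X^(N.+1)]mulrC.
Qed.

Lemma fps_div_qpoch_expansion m :
  F m = \sum_(n < m.+1) (H n n * ('X^n * pi n)`_m
                         - a * q ^+ n * H n.+1 n * ('X^(n.+1) * pi n)`_m).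
Proof.
rewrite -(coefM_fps_div F (coef0_qpoch_neq0 q a m.+1) (ltnSn m)).
by rewrite qpoch_trunc_telescope coef_sum; apply: eq_bigr => n _; rewrite coefB !coefZ.
Qed.

End QPochhammerDivision.

Lemma sum_triangle (V : nmodType) N (f : nat -> nat -> V) :
  \sum_(n < N) \sum_(k < n) f n k = \sum_(k < N) \sum_(1 <= j < N - k) f (j + k)%N k.
Proof.
transitivity (\sum_(0 <= n < N) \sum_(0 <= k < N | (k < n)%N) f n k).
  rewrite big_mkord; apply: eq_bigr => n _.
  by rewrite -(big_mkord xpredT) (big_nat_widen _ _ _ _ _ (ltnW (ltn_ord n))).
rewrite (exchange_big_dep_nat xpredT) //= big_mkord; apply: eq_bigr => k _.
have -> : \sum_(1 <= j < N - k) f (j + k)%N k = \sum_(k.+1 <= n < N) f n k.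
  by rewrite -[k.+1]add1n big_addn.
by rewrite (big_nat_widenl _ _ _ _ _ (leq0n k.+1)).
Qed.

Section BExpansion.
Variables (K : fieldType) (a q : K) (B : nat -> K).
Local Notation pi := (qpoch a q).
Hypothesis B_expansion :
  forall m, \sum_(1 <= n < m.+1) B n * ('X^n * pi n)`_m = (m == 1)%:R.

Lemma coef_B_expansion N i : (i < N)%N ->
  \sum_(1 <= j < N) B j * ('X^j * pi j)`_i = (i == 1)%:R.
Proof.
move=> lt_iN; rewrite (big_cat_nat (ltn0Sn i) lt_iN) /= B_expansion.
rewrite [X in _ + X]big_nat_cond big1 ?addr0 // => j /andP[/andP[lt_ij _] _].
by rewrite coefXnM lt_ij mulr0.
Qed.

Lemma B_expansion_shift k N m : (m < k + N)%N ->
  \sum_(1 <= j < N) B j * q ^+ (j * k) * ('X^(j + k) * pi (j + k))`_m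
  = q ^+ k * ('X^(k.+1) * pi k)`_m.
Proof.
move=> lt_m_kN; set c := q ^+ k.
pose W := \sum_(1 <= j < N) (B j * c ^+ j) *: ('X^j * qpoch (a * c) q j).
have W_low i : (i < N)%N -> W`_i = (c *: 'X)`_i.
  move=> lt_iN; transitivity (c ^+ i * (i == 1)%:R).
    rewrite -(coef_B_expansion lt_iN) mulr_sumr coef_sum; apply: eq_bigr => j _.
    by rewrite coefZ -mulrA coefXnM_qpochZ mulrCA.
  by rewrite coefZ coefX; case: eqP => [->|_]; rewrite ?mulr0.
have -> : \sum_(1 <= j < N) B j * q ^+ (j * k) * ('X^(j + k) * pi (j + k))`_m
          = ('X^k * (pi k * W))`_m.
  rewrite /W !mulr_sumr coef_sum; apply: eq_bigr => j _.
  rewrite -!scalerAr coefZ -exprM mulnC addnC exprD qpochD; congr (_ * _).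
  by rewrite mulrACA -mulrA.
have -> : c * ('X^(k.+1) * pi k)`_m = ('X^k * (pi k * (c *: 'X)))`_m.
  by rewrite -!scalerAr coefZ exprSr -mulrA [pi k * _]mulrC.
rewrite !coefXnM; case: ltnP => // le_km.
by apply: eq_coefMr => i le_i; apply: W_low; lia.
Qed.

Lemma sum_B_expansion_shift (h : nat -> K) m :
  \sum_(n < m.+1) (\sum_(k < n) B (n - k)%N * q ^+ ((n - k) * k) * h k)
                  * ('X^n * pi n)`_m
  = \sum_(k < m.+1) q ^+ k * h k * ('X^(k.+1) * pi k)`_m.
Proof.
under eq_bigr do rewrite mulr_suml.
rewrite (sum_triangle m.+1 (fun n k =>
           B (n - k)%N * q ^+ ((n - k) * k) * h k * ('X^n * pi n)`_m)).
apply: eq_bigr => k _; under eq_bigr do rewrite addnK mulrAC.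
rewrite -mulr_suml B_expansion_shift; first by rewrite mulrAC.
by have := ltn_ord k; lia.
Qed.

End BExpansion.

Theorem corollary2p3 (R : realType) (a q : R[i]) (B : nat -> R[i])
  (F : nat -> R[i]) :
  q != 0 ->
  (forall m : nat,
     \sum_(1 <= n < m.+1) B n * ('X^n * qpoch a q n)`_m = (m == 1)%:R) ->
  let c := fun n : nat =>
    fps_div_coef F (qpoch a q n) n
    - a * \sum_(k < n) B (n - k)%N * q ^+ ((n - k) * k)
                        * fps_div_coef F (qpoch a q k.+1) k in
  forall m : nat,
    F m = \sum_(n < m.+1) c n * ('X^n * qpoch a q n)`_m.
Proof.
move=> _ B_expansion c m; rewrite (fps_div_qpoch_expansion a q F m) /c.
under [RHS]eq_bigr do rewrite mulrBl -mulrA.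
rewrite !sumrB -mulr_sumr.
rewrite (sum_B_expansion_shift B_expansion
           (fun k => fps_div_coef F (qpoch a q k.+1) k)) mulr_sumr.
by congr (_ - _); apply: eq_bigr => n _; rewrite !mulrA.
Qed.
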